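(* Let $r>1$ be real and let $p,q$ be $r$-mighty primes with $p>q^2$. Then $\sigma_{-r}(qp)<\sigma_{-r}(q^2)$.
   Context: $p_m$ denotes the $m$-th prime. For $n\in\mathbb{N}$, $\sigma_{-r}(n)=\sum_{d\mid n}d^{-r}$. Let $u_m(r)=\prod_{t=m+1}^\infty\frac1{1-p_t^{-r}}$. A prime $p_m$ is $r$-mighty if $1+p_m^{-r}>u_m(r)$. *)

From Stdlib Require Import Reals.
From Coquelicot Require Import Coquelicot.
From mathcomp Require Import ssreflect ssrbool ssrnat seq prime.

Open Scope R_scope.

Definition sigma_neg (r : R) (n : nat) : R :=
  foldr Rplus 0 (map (fun d : nat => Rpower (INR d) (- r)) (divisors n)).

Definition u_partial (r : R) (p N : nat) : R :=
  foldr Rmult 1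
    (map (fun q : nat => / (1 - Rpower (INR q) (- r)))
         (filter prime (iota p.+1 (N - p)))).

(* u_m(r) = prod_{t >= m+1} 1/(1 - p_t^{-r}) where p = p_m: the infinite
   product over all primes greater than p, as the limit of partial products. *)
Definition u_tail (r : R) (p : nat) : Rbar := Lim_seq (u_partial r p).

Definition mighty (r : R) (p : nat) : Prop :=
  prime p /\ Rbar_lt (u_tail r p) (Finite (1 + Rpower (INR p) (- r))).

From Stdlib Require Import Reals Lra.
From Coquelicot Require Import Coquelicot.
From mathcomp Require Import ssreflect ssrbool ssrfun ssrnat eqtype seq path div bigop prime binomial.
From mathcomp Require Import zify.

(* Write Q = q^r and P = p^r.  The divisor lists of qp and q^2 give
   sigma_{-r}(q^2) - sigma_{-r}(qp) = 1/Q^2 - (1 + 1/Q)/P, so the claim is Q^2 + Q < P,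
   which follows from p >= q^2 + 1 as soon as r >= 2.

   That r > 2 follows from the mightiness of p >= 5 alone.  The tail product satisfies
   u(r) >= 1 + sum_{t > p prime} t^{-r}, and for r <= 2 every term is at least
   p^{-r} (p/t)^2, so mightiness forces sum_{p < t prime} (p/t)^2 < 1.  This fails: for
   p >= 17 the interval (p, 2p] contains four primes, each contributing at least 1/4
   (Erdos' proof of Bertrand's postulate for p >= 1985, an explicit chain of primes
   below), and for p in {5, 7, 11, 13} the primes up to 29 already suffice. *)

Section CentralBinomial.
Local Open Scope nat_scope.

Lemma bin_odd_mid_sym k : 'C((2 * k).+1, k.+1) = 'C((2 * k).+1, k).
Proof. by rewrite -bin_sub; [congr 'C(_, _); lia | lia]. Qed.

Lemma bin_mid_double k : 'C((2 * k).+2, k.+1) = 2 * 'C((2 * k).+1, k).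
Proof. by rewrite binS bin_odd_mid_sym; lia. Qed.

Lemma bin_mid_succ n : n.+1 * 'C((2 * n).+2, n.+1) = 2 * (2 * n).+1 * 'C(2 * n, n).
Proof.
have := mul_bin_diag (2 * n).+1 n; rewrite bin_odd_mid_sym /= => diag.
by rewrite bin_mid_double mulnCA -diag mulnA.
Qed.

Lemma bin_odd_mid_succ k :
  k.+2 * 'C((2 * k).+3, k.+1) = 2 * (2 * k).+3 * 'C((2 * k).+1, k).
Proof.
have := mul_bin_diag (2 * k).+3 k.+1.
have -> : (2 * k).+3 = (2 * k.+1).+1 by lia.
rewrite bin_odd_mid_sym /= => <-.
by rewrite mulnS add2n bin_mid_double mulnCA mulnA.
Qed.

Lemma central_bin_lower n : 4 ^ n <= (2 * n).+1 * 'C(2 * n, n).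
Proof.
elim: n => [|n IH]; first by rewrite bin0.
have rec := bin_mid_succ n.
rewrite -(leq_pmul2l (ltn0Sn n)) expnS mulnS add2n.
nia.
Qed.

Lemma bin_odd_mid_upper k : 'C((2 * k).+1, k) <= 4 ^ k.
Proof.
elim: k => [|k IH]; first by rewrite bin0.
have rec := bin_odd_mid_succ k.
rewrite -(leq_pmul2l (ltn0Sn k.+1)) expnS mulnS add2n.
nia.
Qed.

End CentralBinomial.

Section Legendre.
Local Open Scope nat_scope.

Lemma logn_nonprime p n : ~~ prime p -> logn p n = 0.
Proof. by move=> p_npr; rewrite lognE (negPf p_npr). Qed.

Definition bin_mid_carry p n k := (2 * n) %/ p ^ k - 2 * (n %/ p ^ k).

Lemma bin_mid_carry_le1 p n k : 0 < p -> bin_mid_carry p n k <= 1.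
Proof.
move=> p_gt0; rewrite /bin_mid_carry; set d := p ^ k.
have d_gt0 : 0 < d by rewrite expn_gt0 p_gt0.
have := divn_eq n d; have := ltn_pmod n d_gt0.
have := divn_eq (2 * n) d; have := ltn_pmod (2 * n) d_gt0.
set a := (2 * n) %/ d; set c := n %/ d => lt_rem2n def_2n lt_remn def_n.
suff : a * d < (2 * c + 2) * d by rewrite ltn_pmul2r //; lia.
nia.
Qed.

Lemma bin_mid_carry_small p n k : 2 * n < p ^ k -> bin_mid_carry p n k = 0.
Proof. by move=> lt_2n; rewrite /bin_mid_carry !divn_small //; lia. Qed.

Lemma logn_bin_mid p n : prime p ->
  logn p 'C(2 * n, n) = \sum_(1 <= k < (2 * n).+1) bin_mid_carry p n k.
Proof.
move=> p_pr.
have le_n_2n : n <= 2 * n by lia.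
have := congr1 (logn p) (bin_fact le_n_2n).
have -> : 2 * n - n = n by lia.
rewrite lognM ?bin_gt0 ?muln_gt0 ?fact_gt0 //.
rewrite lognM ?fact_gt0 // !logn_fact //.
have -> : \sum_(1 <= k < n.+1) n %/ p ^ k = \sum_(1 <= k < (2 * n).+1) n %/ p ^ k.
  rewrite [RHS](@big_cat_nat _ _ _ n.+1) //=.
  rewrite [X in _ = _ + X]big1_seq ?addn0 // => k /andP[_].
  rewrite mem_index_iota => /andP[lt_nk _]; apply: divn_small.
  exact: leq_trans lt_nk (ltnW (ltn_expl _ (prime_gt1 p_pr))).
suff -> : \sum_(1 <= k < (2 * n).+1) (2 * n) %/ p ^ k
   = \sum_(1 <= k < (2 * n).+1) bin_mid_carry p n k
     + 2 * \sum_(1 <= k < (2 * n).+1) n %/ p ^ k by lia.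
rewrite big_distrr -big_split /=; apply: eq_bigr => k _.
rewrite subnK // leq_divRL ?expn_gt0 ?prime_gt0 // -mulnA leq_mul //.
exact: leq_divM.
Qed.

Lemma pow_logn_bin_mid p n : prime p -> 0 < n -> p ^ logn p 'C(2 * n, n) <= 2 * n.
Proof.
move=> p_pr n_gt0; have p_gt1 := prime_gt1 p_pr.
have /andP[le_pT lt_2nT] : p ^ trunc_log p (2 * n) <= 2 * n < p ^ (trunc_log p (2 * n)).+1.
  by apply: trunc_log_bounds; lia.
set T := trunc_log p (2 * n) in le_pT lt_2nT.
suff le_vT : logn p 'C(2 * n, n) <= T.
  exact: leq_trans (leq_pexp2l (ltnW p_gt1) le_vT) le_pT.
have lt_T2n : T < 2 * n by apply: leq_trans le_pT; exact: ltn_expl.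
rewrite logn_bin_mid // (@big_cat_nat _ _ _ T.+1) //=; last by lia.
rewrite [X in _ + X]big1_seq ?addn0; last first.
  move=> k /andP[_]; rewrite mem_index_iota => /andP[lt_Tk _].
  by apply/bin_mid_carry_small/(leq_trans lt_2nT); rewrite leq_exp2l ?prime_gt1; lia.
apply: (@leq_trans (\sum_(1 <= k < T.+1) 1)).
  by apply: leq_sum => k _; apply: bin_mid_carry_le1; lia.
by rewrite sum_nat_const_nat; lia.
Qed.

Lemma logn_bin_mid_le1 p n : prime p -> 2 * n < p * p -> logn p 'C(2 * n, n) <= 1.
Proof.
move=> p_pr lt_2n_pp; have p_gt1 := prime_gt1 p_pr.
case: n lt_2n_pp => [|n] lt_2n_pp; first by rewrite bin0 logn1.
rewrite -ltnS -(ltn_exp2l _ _ p_gt1) expnS expn1.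
exact: leq_ltn_trans (pow_logn_bin_mid _ _ p_pr (ltn0Sn n)) lt_2n_pp.
Qed.

Lemma logn_bin_mid_gt p n : 0 < n -> 2 * n < p -> logn p 'C(2 * n, n) = 0.
Proof.
move=> n_gt0 lt_2n_p; case/boolP: (prime p) => p_pr; last by rewrite logn_nonprime.
have := pow_logn_bin_mid _ _ p_pr n_gt0; case: (logn p _) => // v le_pv.
have : p <= p ^ v.+1 by rewrite -{1}(expn1 p) leq_exp2l ?prime_gt1.
lia.
Qed.

Lemma logn_bin_mid_between p n : prime p -> 2 < p -> p <= n -> 2 * n < 3 * p ->
  logn p 'C(2 * n, n) = 0.
Proof.
move=> p_pr p_gt2 le_pn lt_2n_3p.
rewrite logn_bin_mid // big_nat_recl; last by lia.
rewrite big1_seq ?addn0.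
  rewrite /bin_mid_carry expn1.
  have -> : (2 * n) %/ p = 2 by apply/eqP; rewrite eqn_leq -ltnS ltn_divLR ?leq_divRL; lia.
  by have -> : n %/ p = 1 by apply/eqP; rewrite eqn_leq -ltnS ltn_divLR ?leq_divRL; lia.
move=> k /andP[_]; rewrite mem_index_iota => /andP[k_gt0 _].
apply: bin_mid_carry_small; apply: (@leq_trans (p ^ 2)); last by rewrite leq_exp2l ?(prime_gt1 p_pr); lia.
have : 3 * p <= p * p by rewrite leq_mul2r; lia.
rewrite expnS expn1; lia.
Qed.

End Legendre.

Section Primorial.
Local Open Scope nat_scope.

Lemma prod_pow_logn {n N} : 0 < n -> n <= N -> n = \prod_(0 <= p < N.+1) p ^ logn p n.
Proof.
move=> n_gt0 le_nN; rewrite -{1}(partnT n_gt0) (widen_partn _ le_nN).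
exact: eq_bigl.
Qed.

Lemma dvdn_prod_subrange (F : nat -> nat) a b N : b <= N ->
  \prod_(a <= i < b) F i %| \prod_(0 <= i < N) F i.
Proof.
move=> le_bN; case: (leqP a b) => [le_ab | lt_ba]; last by rewrite big_geq ?dvd1n // ltnW.
rewrite (big_cat_nat (leq0n a) (leq_trans le_ab le_bN)) (big_cat_nat le_ab le_bN) /=.
by rewrite mulnCA dvdn_mulr.
Qed.

Lemma leq_prod_primes_dvd n a b : 0 < n ->
  (forall p, prime p -> a <= p < b -> p %| n) ->
  \prod_(a <= p < b | prime p) p <= n.
Proof.
move=> n_gt0 dvd_n.
rewrite {1}(prod_pow_logn n_gt0 (leq_maxl n b)) big_mkcond /=.
apply: (@leq_trans (\prod_(a <= p < b) p ^ logn p n)).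
  rewrite big_seq [X in _ <= X]big_seq; apply: leq_prod => p.
  rewrite mem_index_iota => range_p; case: ifP => p_pr; last by rewrite logn_nonprime ?p_pr.
  rewrite -{1}(expn1 p) leq_exp2l ?prime_gt1 // logn_gt0 mem_primes p_pr n_gt0.
  exact: dvd_n.
apply: dvdn_leq; first by apply: prodn_gt0 => -[|p] //; rewrite expn_gt0.
by apply: dvdn_prod_subrange; exact: leqW (leq_maxr _ _).
Qed.

Lemma logn_fact_small p m : prime p -> m < p -> logn p m`! = 0.
Proof.
move=> p_pr lt_mp; rewrite logn_fact //; apply: big1_seq => j /andP[_].
rewrite mem_index_iota => /andP[j_gt0 _]; apply: divn_small.
by apply: leq_trans lt_mp _; rewrite -{1}(expn1 p) leq_exp2l ?(prime_gt1 p_pr).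
Qed.

Lemma prod_primes_odd_mid_le_bin k :
  \prod_(k.+2 <= p < (2 * k).+2 | prime p) p <= 'C((2 * k).+1, k).
Proof.
apply: leq_prod_primes_dvd => [|p p_pr /andP[lt_kp le_p2k]]; first by rewrite bin_gt0; lia.
have le_k_2k1 : k <= (2 * k).+1 by lia.
have := congr1 (logn p) (bin_fact le_k_2k1).
have -> : (2 * k).+1 - k = k.+1 by lia.
rewrite lognM ?bin_gt0 ?muln_gt0 ?fact_gt0 // lognM ?fact_gt0 //.
rewrite (logn_fact_small _ _ p_pr (ltnW lt_kp)) (logn_fact_small _ _ p_pr lt_kp).
rewrite !addn0 => logn_C.
have : 0 < logn p 'C((2 * k).+1, k).
  by rewrite logn_C logn_gt0 mem_primes p_pr fact_gt0 dvdn_fact // prime_gt0.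
by rewrite logn_gt0 mem_primes => /and3P[].
Qed.

Definition primorial m := \prod_(0 <= p < m.+1 | prime p) p.

Lemma primorial_le m : primorial m <= 4 ^ m.
Proof.
elim/ltn_ind: m => m IH.
have [le_m2 | lt_2m] := leqP m 2.
  by case: m le_m2 {IH} => [|[|[|]]] //; rewrite /primorial unlock.
case/boolP: (odd m) => m_odd.
  have [k def_m] : exists k, m = (2 * k).+1.
    by exists m./2; rewrite -{1}(odd_double_half m) m_odd; lia.
  have IHk : primorial k.+1 <= 4 ^ k.+1 by apply: IH; lia.
  rewrite /primorial def_m (@big_cat_nat _ _ _ k.+2) /=; [|lia|lia].
  have -> : 4 ^ (2 * k).+1 = 4 ^ k.+1 * 4 ^ k by rewrite -expnD; congr (_ ^ _); lia.
  exact: leq_mul IHk (leq_trans (prod_primes_odd_mid_le_bin k) (bin_odd_mid_upper k)).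
have [n def_m] : exists n, m = n.+1 by exists m.-1; lia.
have m_npr : prime n.+1 = false.
  by rewrite -def_m; apply/negP => /even_prime[m2 | m_odd']; [lia | rewrite m_odd' in m_odd].
rewrite /primorial def_m big_mkcond big_nat_recr //= m_npr muln1 -big_mkcond.
apply: (@leq_trans (4 ^ n)); first by apply: IH; lia.
by rewrite leq_exp2l //; lia.
Qed.

End Primorial.

Lemma INR_expn m n : INR (m ^ n) = (INR m ^ n)%R.
Proof. by elim: n => [|n IH]; rewrite ?expn0 // expnS mult_INR IH. Qed.

Lemma mul_ln_succ_lt_sq_ln2 (x : R) : (63 <= x)%R -> ((6 * x + 30) * ln (x + 1) < x * x * ln 2)%R.
Proof.
move=> x_ge63.
have ln_x1 : (ln (x + 1) <= 6 * ln 2 + (x + 1) / 64 - 1)%R.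
  have x1_pos : (0 < (x + 1) / 64)%R by apply: Rdiv_lt_0_compat; lra.
  have -> : ln (x + 1) = (ln 64 + ln ((x + 1) / 64))%R.
    by rewrite -ln_mult; [congr ln; field | lra | done].
  have -> : ln 64 = (6 * ln 2)%R by rewrite (_ : 64%R = 2 ^ 6)%R ?ln_pow /=; lra.
  by have := exp_ineq1_le (ln ((x + 1) / 64)); rewrite exp_ln //; lra.
have D_pos : (0 < x * x - 36 * x - 180)%R by nra.
have := Rmult_le_compat_l (6 * x + 30) _ _ (ltac:(lra) : (0 <= 6 * x + 30)%R) ln_x1.
have := Rmult_lt_compat_r _ _ _ D_pos ln_lt_2.
nra.
Qed.

Lemma succ_pow_lt_exp2_sq (s : nat) : (63 <= s)%N ->
  (s.+1 ^ (6 * s + 30) < 2 ^ (s * s))%N.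
Proof.
move=> s_ge63; apply/ltP/INR_lt; rewrite !INR_expn (_ : INR 2 = 2%R) //.
have x_ge63 : (63 <= INR s)%R.
  by rewrite (_ : 63%R = INR 63); [apply/le_INR/leP | rewrite INR_IZR_INZ].
apply: ln_lt_inv; [apply: pow_lt; rewrite S_INR; lra | apply: pow_lt; lra |].
rewrite !ln_pow ?S_INR; [| lra | lra].
have -> : INR (6 * s + 30) = (6 * INR s + 30)%R by rewrite plus_INR mult_INR /=; ring.
by rewrite mult_INR; exact: mul_ln_succ_lt_sq_ln2.
Qed.

Section Erdos.
Local Open Scope nat_scope.

Lemma bin_mid_prod n : 0 < n ->
  'C(2 * n, n) = \prod_(0 <= p < (2 * n).+1) p ^ logn p 'C(2 * n, n).
Proof.
move=> n_gt0; have C_gt0 : 0 < 'C(2 * n, n) by rewrite bin_gt0; lia.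
rewrite {1}(prod_pow_logn C_gt0 (leq_maxl _ (2 * n))).
rewrite (@big_cat_nat _ _ _ (2 * n).+1) //=; last by rewrite ltnS leq_maxr.
rewrite [X in _ * X]big1_seq ?muln1 // => p /andP[_].
by rewrite mem_index_iota => /andP[lt_2np _]; rewrite logn_bin_mid_gt.
Qed.

Lemma prod_bin_mid_le_count n a b : 0 < n ->
  \prod_(a <= p < b) p ^ logn p 'C(2 * n, n) <= (2 * n) ^ count prime (index_iota a b).
Proof.
move=> n_gt0; apply: (@leq_trans (\prod_(a <= p < b | prime p) (2 * n))).
  rewrite [X in _ <= X]big_mkcond; apply: leq_prod => p _.
  by case: ifP => p_pr; [exact: pow_logn_bin_mid | rewrite logn_nonprime ?p_pr].
by rewrite big_const_seq iter_muln_1.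
Qed.

Lemma prod_bin_mid_le_primorial n a m : 2 * n < a * a ->
  \prod_(a <= p < m.+1) p ^ logn p 'C(2 * n, n) <= primorial m.
Proof.
move=> lt_2n_aa; apply: (@leq_trans (\prod_(a <= p < m.+1 | prime p) p)).
  rewrite [X in _ <= X]big_mkcond big_seq [X in _ <= X]big_seq /=.
  apply: leq_prod => p; rewrite mem_index_iota => /andP[le_ap _].
  case: ifP => p_pr; last by rewrite logn_nonprime ?p_pr.
  rewrite -[X in _ <= X](expn1 p) leq_exp2l; last exact: prime_gt1.
  by apply: logn_bin_mid_le1 => //; apply: (leq_trans lt_2n_aa); exact: leq_mul.
rewrite /primorial !(big_mkcond prime); apply: dvdn_leq; last exact: dvdn_prod_subrange.
by apply: prodn_gt0 => p; case: ifP => // /prime_gt0.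
Qed.

Lemma bin_mid_upper n a : 3 <= n -> 2 * n < a * a -> a <= (2 * n) %/ 3 + 1 ->
  'C(2 * n, n) <= (2 * n) ^ a * 4 ^ ((2 * n) %/ 3) * (2 * n) ^ count prime (iota n.+1 n).
Proof.
move=> n_ge3 lt_2n_aa; set m := (2 * n) %/ 3 => le_am.
have le_3m : 3 * m <= 2 * n by rewrite [3 * _]mulnC leq_divM.
have lt_2n_3m : 2 * n < 3 * m.+1 by rewrite [3 * _]mulnC ltn_ceil.
have n_gt0 : 0 < n by lia.
rewrite {1}(bin_mid_prod n n_gt0) (@big_cat_nat _ _ _ a) //=; last by lia.
rewrite [\prod_(a <= i < _) _](@big_cat_nat _ _ _ m.+1) /=; [|lia|lia].
rewrite [\prod_(m.+1 <= i < _) _](@big_cat_nat _ _ _ n.+1) /=; [|lia|lia].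
rewrite [X in _ * (_ * (X * _))]big1_seq ?mul1n; last first.
  move=> p /andP[_]; rewrite mem_index_iota => /andP[lt_mp le_pn].
  case/boolP: (prime p) => p_pr; last by rewrite logn_nonprime.
  by rewrite logn_bin_mid_between //; lia.
rewrite mulnA; apply: leq_mul; first apply: leq_mul.
- apply: leq_trans (prod_bin_mid_le_count n 0 a n_gt0) _.
  rewrite leq_exp2l; last by lia.
  by rewrite (leq_trans (count_size _ _)) // size_iota subn0.
- exact: leq_trans (prod_bin_mid_le_primorial n a m lt_2n_aa) (primorial_le m).
- apply: leq_trans (prod_bin_mid_le_count n n.+1 (2 * n).+1 n_gt0) _.
  by rewrite /index_iota subSS (_ : 2 * n - n = n) //; lia.
Qed.

Lemma four_primes_between_large n : 1985 <= n -> 4 <= count prime (iota n.+1 n).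
Proof.
move=> n_large; rewrite leqNgt; apply/negP => few.
set s := Nat.sqrt (2 * n); set a := s.+1; set m := (2 * n) %/ 3.
have [/leP le_ss /ltP lt_2n_aa] := Nat.sqrt_spec (2 * n) (Nat.le_0_l _).
rewrite -/s -/a in le_ss lt_2n_aa.
have s_ge63 : 63 <= s by nia.
have le_3m : 3 * m <= 2 * n by rewrite [3 * _]mulnC leq_divM.
have le_am : a <= m + 1 by nia.
have le_2n_a2 : 2 * n <= a ^ 2 by rewrite expnS expn1 ltnW.
have le_few : (2 * n) ^ count prime (iota n.+1 n) <= (a ^ 2) ^ 3.
  apply: (@leq_trans ((2 * n) ^ 3)); first by rewrite leq_exp2l; lia.
  by rewrite leq_exp2r.
have bound_nm : 4 ^ n <= a ^ (2 * a + 8) * 4 ^ m.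
  have -> : a ^ (2 * a + 8) * 4 ^ m = a ^ 2 * ((a ^ 2) ^ a * 4 ^ m * (a ^ 2) ^ 3).
    rewrite -!expnM [_ * 4 ^ m * _]mulnAC mulnA -!expnD.
    by congr (_ ^ _ * _); lia.
  apply: leq_trans (central_bin_lower n) (leq_mul _ _); first by rewrite expnS expn1.
  apply: leq_trans (bin_mid_upper n a _ lt_2n_aa le_am) _; first by lia.
  by rewrite leq_mul // leq_mul // leq_exp2r.
have le_mn : m <= n by lia.
have bound_diff : 4 ^ (n - m) <= a ^ (2 * a + 8).
  by rewrite -(@leq_pmul2r (4 ^ m)) ?expn_gt0 // -expnD subnK.
have : 2 ^ (s * s) <= s.+1 ^ (6 * s + 30).
  apply: (@leq_trans (2 ^ (6 * (n - m)))); first by rewrite leq_exp2l //; lia.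
  have -> : 2 ^ (6 * (n - m)) = (4 ^ (n - m)) ^ 3.
    by rewrite -expnM (_ : 4 = 2 ^ 2) // -expnM; congr (_ ^ _); lia.
  have -> : s.+1 ^ (6 * s + 30) = (a ^ (2 * a + 8)) ^ 3.
    by rewrite -expnM; congr (_ ^ _); lia.
  by rewrite leq_exp2r.
by rewrite leqNgt succ_pow_lt_exp2_sq.
Qed.

End Erdos.

Section FourPrimes.
Local Open Scope nat_scope.

Lemma four_primes_between_of n x1 x2 x3 x4 :
  prime x1 -> prime x2 -> prime x3 -> prime x4 ->
  n < x1 -> x1 < x2 -> x2 < x3 -> x3 < x4 -> x4 <= 2 * n ->
  4 <= count prime (iota n.+1 n).
Proof.
move=> x1_pr x2_pr x3_pr x4_pr lt_n1 lt_12 lt_23 lt_34 le_4n.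
rewrite -size_filter (@uniq_leq_size _ [:: x1; x2; x3; x4]) //=.
  by rewrite !inE; lia.
move=> x; rewrite !inE mem_filter mem_iota.
by case/or4P => /eqP ->; rewrite ?x1_pr ?x2_pr ?x3_pr ?x4_pr /=; lia.
Qed.

Fixpoint doubling_windows (s : seq nat) : bool :=
  if s is x0 :: (_ :: _ :: _ :: x4 :: _) as t then (x4 <= 2 * x0) && doubling_windows t
  else true.

Lemma four_primes_between_window s n : doubling_windows s -> sorted ltn s -> all prime s ->
  head 0 s <= n < nth 0 s (size s - 4) -> 4 <= count prime (iota n.+1 n).
Proof.
elim: s => [|x0 t IH] //=.
case: t IH => [|x1 [|x2 [|x3 [|x4 r]]]] IH;
  try by move=> _ _ _ /andP[le_0n]; rewrite ltnNge le_0n.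
move=> /andP[le_40 windows_t] /andP[lt_01 sorted_t] /andP[_ all_t] /andP[le_0n lt_n].
have [lt_n1 | le_1n] := ltnP n x1; last first.
  by apply: IH => //=; move: lt_n; rewrite le_1n /= !subSS !subn0.
move: sorted_t all_t => /and4P[lt_12 lt_23 lt_34 _] /and5P[x1_pr x2_pr x3_pr x4_pr _].
apply: (@four_primes_between_of n x1 x2 x3 x4) => //.
exact: leq_trans le_40 (leq_mul (leqnn 2) le_0n).
Qed.

Lemma four_primes_between n : 17 <= n -> 4 <= count prime (iota n.+1 n).
Proof.
move=> n_ge17; have [lt_n | ] := ltnP n 1985; last exact: four_primes_between_large.
set s := filter prime (iota 17 2011).
apply: (@four_primes_between_window s); first by vm_compute.
- exact/sorted_filter/iota_ltn_sorted/ltn_trans.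
- exact: filter_all.
- have -> : head 0 s = 17 by vm_compute.
  have -> : nth 0 s (size s - 4) = 2003 by vm_compute.
  by rewrite n_ge17 /=; lia.
Qed.

End FourPrimes.

Open Scope R_scope.

Lemma foldr_Rmult_cat (f : nat -> R) l1 l2 :
  foldr Rmult 1 (map f (l1 ++ l2)) = foldr Rmult 1 (map f l1) * foldr Rmult 1 (map f l2).
Proof. by elim: l1 => [|x l IH] /=; [ring | rewrite IH; ring]. Qed.

Lemma foldr_Rmult_ge1 (f : nat -> R) l : (forall x, x \in l -> 1 <= f x) -> 1 <= foldr Rmult 1 (map f l).
Proof.
elim: l => [|x l IH] /= f_ge1; first lra.
have := f_ge1 x (mem_head _ _).
have : 1 <= foldr Rmult 1 (map f l) by apply: IH => y l_y; apply: f_ge1; rewrite inE l_y orbT.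
nra.
Qed.

Lemma foldr_Rplus_le (f g : nat -> R) l : (forall x, x \in l -> f x <= g x) ->
  foldr Rplus 0 (map f l) <= foldr Rplus 0 (map g l).
Proof.
elim: l => [|x l IH] /= le_fg; first lra.
apply: Rplus_le_compat; first exact: le_fg (mem_head _ _).
by apply: IH => y l_y; apply: le_fg; rewrite inE l_y orbT.
Qed.

Lemma foldr_Rplus_scale (f : nat -> R) c l : foldr Rplus 0 (map (fun x => c * f x) l) = c * foldr Rplus 0 (map f l).
Proof. by elim: l => [|x l IH] /=; rewrite ?IH; ring. Qed.

Lemma foldr_Rplus_const c (l : seq nat) : foldr Rplus 0 (map (fun=> c) l) = INR (size l) * c.
Proof.
elim: l => [|x l IH]; first by rewrite /=; ring.
by rewrite [size _]/= S_INR /= IH; ring.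
Qed.

Lemma one_add_sum_le_prod_inv (f : nat -> R) l : (forall x, x \in l -> 0 <= f x < 1) ->
  1 + foldr Rplus 0 (map f l) <= foldr Rmult 1 (map (fun x => / (1 - f x)) l).
Proof.
elim: l => [|x l IH] /= f_range; first lra.
have [fx_ge0 fx_lt1] := f_range x (mem_head _ _).
have {}f_range y : y \in l -> 0 <= f y < 1 by move=> l_y; apply: f_range; rewrite inE l_y orbT.
have sum_ge0 : 0 <= foldr Rplus 0 (map f l).
  have := foldr_Rplus_le (fun=> 0) f l; rewrite foldr_Rplus_const Rmult_0_r.
  by apply=> y /f_range; lra.
have inv_ge : 1 + f x <= / (1 - f x).
  apply: (Rmult_le_reg_r (1 - f x)); first lra.
  by rewrite Rinv_l; nra.
have := IH f_range; nra.
Qed.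

Lemma INR_gt1 n : (1 < n)%N -> 1 < INR n.
Proof. by move=> /ltP; apply: lt_1_INR. Qed.

Lemma Rpower_opp_bounds r x : 0 < r -> 1 < x -> 0 < Rpower x (- r) < 1.
Proof.
move=> r_gt0 x_gt1; split; first exact: exp_pos.
by rewrite -(Rpower_O x); [apply: Rpower_lt; lra | lra].
Qed.

Lemma Rpower_opp_ratio_sq r x t : 0 < r <= 2 -> 0 < x < t ->
  Rpower x (- r) * (x / t) ^ 2 <= Rpower t (- r).
Proof.
move=> [r_gt0 r_le2] [x_gt0 lt_xt].
have ratio : (x / t) ^ 2 = exp (2 * (ln x - ln t)).
  have xt_gt0 : 0 < x / t by apply: Rdiv_lt_0_compat; lra.
  rewrite -ln_div; try lra.
  by rewrite (_ : 2 * _ = ln (x / t) + ln (x / t)) ?exp_plus ?exp_ln //=; ring.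
rewrite ratio /Rpower -exp_plus.
have lt_ln := ln_increasing _ _ x_gt0 lt_xt.
have [lt_e | ->] := Rle_lt_or_eq_dec (- r * ln x + 2 * (ln x - ln t)) (- r * ln t) ltac:(nra).
- exact/Rlt_le/exp_increasing.
- exact: Rle_refl.
Qed.

Definition primes_between p N := filter prime (iota p.+1 (N - p)).

Lemma mem_primes_between p N t : (t \in primes_between p N) = prime t && (p < t <= N)%N.
Proof. by rewrite mem_filter mem_iota; congr (_ && _); apply/idP/idP; lia. Qed.

Section Mighty.

Variable r : R.
Hypothesis r_gt0 : 0 < r.

Lemma prod_euler_factors_ge1 l : all prime l ->
  1 <= foldr Rmult 1 (map (fun q : nat => / (1 - Rpower (INR q) (- r))) l).
Proof.
move=> /allP l_pr; apply: foldr_Rmult_ge1 => q.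
move=> /l_pr/prime_gt1/INR_gt1/(Rpower_opp_bounds _ _ r_gt0) q_bd.
by rewrite -Rinv_1; apply: Rinv_le_contravar; lra.
Qed.

Lemma u_partial_monotone p N N' : (p <= N <= N')%N -> u_partial r p N <= u_partial r p N'.
Proof.
move=> /andP[le_pN le_NN']; rewrite /u_partial.
have -> : (N' - p = (N - p) + (N' - N))%N by lia.
rewrite iotaD filter_cat foldr_Rmult_cat.
have := prod_euler_factors_ge1 _ (filter_all prime (iota p.+1 (N - p))).
have := prod_euler_factors_ge1 _ (filter_all prime (iota (p.+1 + (N - p)) (N' - N))).
nra.
Qed.

Lemma u_partial_lt_mighty p N : mighty r p -> (p <= N)%N ->
  u_partial r p N < 1 + Rpower (INR p) (- r).
Proof.
move=> [_ u_lt] le_pN.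
suff u_le : Rbar_le (u_partial r p N) (u_tail r p) by exact: Rbar_le_lt_trans u_le u_lt.
rewrite -(Lim_seq_const (u_partial r p N)) /u_tail.
by apply: Lim_seq_le_loc; exists N => N' /leP le_NN'; apply: u_partial_monotone; rewrite le_pN.
Qed.

Lemma one_add_sum_le_u_partial p N :
  1 + foldr Rplus 0 (map (fun t => Rpower (INR t) (- r)) (primes_between p N)) <= u_partial r p N.
Proof.
apply: one_add_sum_le_prod_inv => t; rewrite mem_primes_between => /andP[t_pr _].
by have := Rpower_opp_bounds _ _ r_gt0 (INR_gt1 _ (prime_gt1 t_pr)); lra.
Qed.

End Mighty.

Lemma mighty_sum_sq_ratio_lt1 r p N : 0 < r <= 2 -> mighty r p -> (p <= N)%N ->
  foldr Rplus 0 (map (fun t => (INR p / INR t) ^ 2) (primes_between p N)) < 1.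
Proof.
move=> [r_gt0 r_le2] p_mighty le_pN.
have p_gt0 : 0 < INR p by apply/lt_0_INR/ltP; exact: prime_gt0 (proj1 p_mighty).
have pr_gt0 : 0 < Rpower (INR p) (- r) by apply: exp_pos.
have := u_partial_lt_mighty r r_gt0 p N p_mighty le_pN.
have := one_add_sum_le_u_partial r r_gt0 p N.
have : Rpower (INR p) (- r) * foldr Rplus 0 (map (fun t => (INR p / INR t) ^ 2) (primes_between p N))
       <= foldr Rplus 0 (map (fun t => Rpower (INR t) (- r)) (primes_between p N)).
  rewrite -foldr_Rplus_scale; apply: foldr_Rplus_le => t.
  rewrite mem_primes_between => /and3P[_ lt_pt _].
  apply: (Rpower_opp_ratio_sq _ _ _ (conj r_gt0 r_le2)); split => //; exact/lt_INR/ltP.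
move=> scaled sum_le u_lt.
by apply: (Rmult_lt_reg_l (Rpower (INR p) (- r))); lra.
Qed.

Lemma primes_5_to_16 p : prime p -> (5 <= p < 17)%N -> p \in [:: 5; 7; 11; 13]%N.
Proof.
move=> p_pr /andP[p_ge5 lt_p17].
have small : all (fun k => prime k ==> (k \in [:: 2; 3; 5; 7; 11; 13]%N)) (iota 0 17).
  by vm_compute.
move/allP/(_ p): small; rewrite mem_iota lt_p17 p_pr /= => /(_ isT).
by rewrite !inE; case/orP=> [/eqP p2 | /orP[/eqP p3 | ->]] //; lia.
Qed.

Lemma sum_sq_ratio_ge1 p : prime p -> (5 <= p)%N ->
  exists2 N, (p <= N)%N & 1 <= foldr Rplus 0 (map (fun t => (INR p / INR t) ^ 2) (primes_between p N)).
Proof.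
move=> p_pr p_ge5; have [lt_p17 | le_17p] := ltnP p 17.
  have : p \in [:: 5; 7; 11; 13]%N by apply: primes_5_to_16; rewrite ?p_ge5.
  by rewrite !inE => /or4P[] /eqP ->; exists 29%N => //;
    vm_compute (primes_between _ _); rewrite /=; field_simplify; lra.
exists (2 * p)%N; first lia.
have several := four_primes_between p le_17p.
apply: (@Rle_trans _ (INR (size (primes_between p (2 * p))) * / 4)).
  rewrite size_filter (_ : (2 * p - p = p)%N); last lia.
  apply: (@Rle_trans _ (INR 4 * / 4)); first by rewrite /=; lra.
  by apply: Rmult_le_compat_r; [lra | apply/le_INR/leP].
rewrite -foldr_Rplus_const; apply: foldr_Rplus_le => t.
rewrite mem_primes_between => /and3P[_ lt_pt le_t2p].
have t_gt0 : 0 < INR t by apply/lt_0_INR/ltP; lia.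
have le_t2p' : INR t <= 2 * INR p by rewrite -[2]/(INR 2) -mult_INR; apply/le_INR/leP.
have : / 2 <= INR p / INR t by apply: (Rmult_le_reg_r (INR t)) => //; field_simplify; lra.
nra.
Qed.

Lemma mighty_exponent_gt2 r p : 0 < r -> mighty r p -> (5 <= p)%N -> 2 < r.
Proof.
move=> r_gt0 p_mighty p_ge5; apply: Rnot_le_lt => r_le2.
have [N le_pN sum_ge1] := sum_sq_ratio_ge1 p (proj1 p_mighty) p_ge5.
have := mighty_sum_sq_ratio_lt1 r p N (conj r_gt0 r_le2) p_mighty le_pN; lra.
Qed.

Section PrimeDivisors.
Local Open Scope nat_scope.

Lemma dvdn_prime p d : prime p -> (d %| p) = (d == 1) || (d == p).
Proof.
move=> p_pr; apply/idP/idP; first by case/primeP: p_pr => _ /[apply].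
by case/orP => /eqP ->; rewrite ?dvd1n ?dvdnn.
Qed.

Lemma dvdn_prime_mul q m d : prime q -> d %| q * m -> d %| m \/ exists2 e, e %| m & d = q * e.
Proof.
move=> q_pr; have [/dvdnP[e ->] | q_ndvd] := boolP (q %| d).
  by rewrite mulnC dvdn_pmul2l ?prime_gt0 // => e_dvd; right; exists e.
by rewrite Gauss_dvdr 1?coprime_sym ?prime_coprime //; left.
Qed.

Lemma dvdn_mul_primes q p d : prime q -> prime p ->
  (d %| q * p) = [|| d == 1, d == q, d == p | d == q * p].
Proof.
move=> q_pr p_pr; apply/idP/idP => [/(dvdn_prime_mul _ _ _ q_pr)[] | ].
- by rewrite dvdn_prime // => /orP[] ->; rewrite ?orbT.
- by case=> e; rewrite dvdn_prime // => /orP[] /eqP -> ->; rewrite ?muln1 eqxx ?orbT.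
- by case/or4P => /eqP ->; [exact: dvd1n | exact: dvdn_mulr | exact: dvdn_mull | ].
Qed.

Lemma divisors_mul_primes q p : prime q -> prime p -> q < p ->
  divisors (q * p) = [:: 1; q; p; q * p].
Proof.
move=> q_pr p_pr lt_qp; apply: (irr_sorted_eq ltn_trans ltnn (sorted_divisors_ltn _)).
  by rewrite /= prime_gt1 // lt_qp ltn_Pmull ?prime_gt1 ?prime_gt0.
by move=> d; rewrite -dvdn_divisors ?muln_gt0 ?prime_gt0 // dvdn_mul_primes // !inE.
Qed.

Lemma divisors_prime_sq q : prime q -> divisors (q * q) = [:: 1; q; q * q].
Proof.
move=> q_pr; apply: (irr_sorted_eq ltn_trans ltnn (sorted_divisors_ltn _)).
  by rewrite /= prime_gt1 // ltn_Pmull ?prime_gt1 ?prime_gt0.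
move=> d; rewrite -dvdn_divisors ?muln_gt0 ?prime_gt0 // dvdn_mul_primes // !inE.
by case: (d == q); rewrite ?orbT.
Qed.

End PrimeDivisors.

Lemma Rpower_1_base y : Rpower 1 y = 1.
Proof. by rewrite /Rpower ln_1 Rmult_0_r exp_0. Qed.

Lemma sigma_neg_mul_primes r q p : prime q -> prime p -> (q < p)%N ->
  sigma_neg r (q * p) =
  1 + Rpower (INR q) (- r) + Rpower (INR p) (- r) + Rpower (INR q) (- r) * Rpower (INR p) (- r).
Proof.
move=> q_pr p_pr lt_qp; rewrite /sigma_neg divisors_mul_primes //= Rpower_1_base mult_INR.
rewrite -Rpower_mult_distr; [ring | |]; apply/lt_0_INR/ltP; exact: prime_gt0.
Qed.

Lemma sigma_neg_prime_sq r q : prime q ->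
  sigma_neg r (q * q) = 1 + Rpower (INR q) (- r) + Rpower (INR q) (- r) * Rpower (INR q) (- r).
Proof.
move=> q_pr; rewrite /sigma_neg divisors_prime_sq //= Rpower_1_base mult_INR.
rewrite -Rpower_mult_distr; [ring | |]; apply/lt_0_INR/ltP; exact: prime_gt0.
Qed.

Lemma Rpower_sq_add_lt r a b : 2 <= r -> 2 <= a -> a * a + 1 <= b ->
  Rpower a r * Rpower a r + Rpower a r < Rpower b r.
Proof.
move=> r_ge2 a_ge2 le_b.
have a_gt0 : 0 < a by lra.
have sq x : 0 < x -> Rpower x 2 = x * x by move=> x_gt0; rewrite -[2]/(INR 2) Rpower_pow /=; lra.
set E := Rpower a (r - 2).
have E_ge1 : 1 <= E by rewrite /E -(Rpower_O a) //; apply: Rle_Rpower; lra.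
have a_r : Rpower a r = E * (a * a) by rewrite /E -sq // -Rpower_plus; congr Rpower; ring.
have b_r : (E * E) * ((a * a + 1) * (a * a + 1)) <= Rpower b r.
  apply: (@Rle_trans _ (Rpower (a * a + 1) r)); last by apply: Rle_Rpower_l; nra.
  have aa1_gt0 : 0 < a * a + 1 by nra.
  have -> : Rpower (a * a + 1) r = Rpower (a * a + 1) (r - 2) * ((a * a + 1) * (a * a + 1)).
    by rewrite -(sq (a * a + 1)) // -Rpower_plus; congr Rpower; ring.
  apply: Rmult_le_compat_r; first nra.
  by rewrite /E Rpower_mult_distr //; apply: Rle_Rpower_l; nra.
rewrite a_r; nra.
Qed.

Lemma sigma_neg_mul_prime_lt_sq r q p : prime q -> prime p -> (q < p)%N ->
  Rpower (INR q) r * Rpower (INR q) r + Rpower (INR q) r < Rpower (INR p) r ->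
  sigma_neg r (q * p) < sigma_neg r (q * q).
Proof.
move=> q_pr p_pr lt_qp; rewrite sigma_neg_mul_primes ?sigma_neg_prime_sq // !Rpower_Ropp.
set Q := Rpower (INR q) r; set P := Rpower (INR p) r => pow_lt.
have Q_gt0 : 0 < Q by apply: exp_pos.
have P_gt0 : 0 < P by apply: exp_pos.
suff : / P * (1 + / Q) < / Q * / Q by lra.
have PQQ_gt0 : 0 < P * Q * Q by do 2?apply: Rmult_lt_0_compat.
apply: (Rmult_lt_reg_r (P * Q * Q)) => //.
have -> : / P * (1 + / Q) * (P * Q * Q) = Q * Q + Q by field; lra.
by have -> : / Q * / Q * (P * Q * Q) = P by field; lra.
Qed.

Theorem mainTheorem8 (r : R) (p q : nat) :
  1 < r -> mighty r p -> mighty r q -> (q * q < p)%nat ->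
  sigma_neg r (q * p) < sigma_neg r (q * q).
Proof.
move=> r_gt1 p_mighty [q_pr _] lt_qq_p; have p_pr := proj1 p_mighty.
have q_ge2 := prime_gt1 q_pr.
have r_gt2 : 2 < r by apply: (mighty_exponent_gt2 r p) => //; [lra | nia].
apply: sigma_neg_mul_prime_lt_sq => //; first by nia.
apply: Rpower_sq_add_lt; first lra.
  by rewrite -[2]/(INR 2); apply/le_INR/leP.
by rewrite -mult_INR -S_INR; apply/le_INR/leP.
Qed.
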